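(* Let $m\ge2$, $n=2m+1$, $A_1=E_1+E_{m+1}$, $A_i=E_i+E_{m+i}+E_{i-1,n}+E_{m+i-1,n}$ for $i=2,\dots,m-1$, $A_m=E_m-E_{2m}+E_{m-1,n}+E_{2m-1,n}$, $B=I_{m+1}\oplus0_m$, $c=e_m\in\mathbb R^m$. Let $(D)$ be $\inf\{B\bullet Y:A_i\bullet Y=c_i\ \forall i,\ Y\succeq0\}$ and $(HD)$ the system $A_i\bullet Y=0\ (i=1,\dots,m)$, $B\bullet Y=0$, $Y\succeq0$. Then $d(D)=m-1$ and $d(HD)=m$.
   Context: $E_{ij}\in\mathcal S^n$ has only nonzero entries $1$ in positions $(i,j),(j,i)$; $E_i:=E_{ii}$; $S\bullet T=\operatorname{trace}(ST)$. For a closed convex cone $K$, $K^*=\{y:\langle y,x\rangle\ge0\ \forall x\in K\}$; a face of $K$ is a convex $F\subseteq K$ with $x,y\in K,\frac12(x+y)\in F\Rightarrow x,y\in F$. For an affine subspace $H$ with $H\cap K\ne\emptyset$, $H^\perp=\{y:\langle y,x\rangle=0\ \forall x\in H\}$, the minimal cone of $H\cap K$ is the smallest face of $K$ containing it, and the singularity degree $d(H\cap K)$ is the smallest $k$ such that there exist $y_1,\dots,y_k$ with $y_i\in F_{i-1}^*\cap H^\perp$, where $F_0=K$, $F_i=F_{i-1}\cap y_i^\perp$, and $F_k$ equals the minimal cone. $d(D)$ and $d(HD)$ denote the singularity degrees of the feasible sets of $(D)$ and $(HD)$ (intersections of the corresponding affine/linear subspaces of $\mathcal S^n$ with $\mathcal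 S^n_+$). *)

From HB Require Import structures.
From mathcomp Require Import all_boot all_order all_algebra.
Set Implicit Arguments. Unset Strict Implicit. Unset Printing Implicit Defensive.
Import Order.TTheory GRing.Theory Num.Theory.
Local Open Scope ring_scope.

Section SDP.
Variable R : rcfType.

Definition symm (n : nat) (Y : 'M[R]_n) : Prop := Y^T = Y.

Definition inner (n : nat) (S T : 'M[R]_n) : R := \tr (S *m T).

Definition psd (n : nat) (Y : 'M[R]_n) : Prop :=
  symm Y /\ forall x : 'cV[R]_n, 0 <= (x^T *m Y *m x) 0 0.

Definition dual_cone (n : nat) (F : 'M[R]_n -> Prop) (y : 'M[R]_n) : Prop :=
  symm y /\ forall x, F x -> 0 <= inner y x.

Definition perp (n : nat) (H : 'M[R]_n -> Prop) (y : 'M[R]_n) : Prop :=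
  symm y /\ forall x, H x -> inner y x = 0.

Definition convex (n : nat) (F : 'M[R]_n -> Prop) : Prop :=
  forall (x y : 'M[R]_n) (t : R), 0 <= t -> t <= 1 -> F x -> F y ->
    F (t *: x + (1 - t) *: y).

Definition is_face (n : nat) (K F : 'M[R]_n -> Prop) : Prop :=
  (forall x, F x -> K x) /\ convex F /\
  forall x y, K x -> K y -> F (2^-1 *: (x + y)) -> F x /\ F y.

Definition min_cone (n : nat) (H K : 'M[R]_n -> Prop) (X : 'M[R]_n) : Prop :=
  K X /\ forall F, is_face K F -> (forall Y, H Y -> K Y -> F Y) -> F X.

(* F_0 = K, F_i = F_{i-1} \cap y_i^perp ; ys i stands for y_{i+1} *)
Fixpoint fr_face (n : nat) (K : 'M[R]_n -> Prop) (ys : nat -> 'M[R]_n) (i : nat)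
  : 'M[R]_n -> Prop :=
  match i with
  | 0 => K
  | i'.+1 => fun X => fr_face K ys i' X /\ inner (ys i') X = 0
  end.

Definition fr_length_ok (n : nat) (H K : 'M[R]_n -> Prop) (k : nat) : Prop :=
  exists ys : nat -> 'M[R]_n,
    (forall i, (i < k)%N -> dual_cone (fr_face K ys i) (ys i) /\ perp H (ys i)) /\
    (forall X, fr_face K ys k X <-> min_cone H K X).

Definition sing_degree (n : nat) (H K : 'M[R]_n -> Prop) (d : nat) : Prop :=
  fr_length_ok H K d /\ forall j, (j < d)%N -> ~ fr_length_ok H K j.

(* E_{ij} with 1-based indices i, j *)
Definition Emx (n i j : nat) : 'M[R]_n :=
  \matrix_(p < n, q < n)
    (if ((p.+1 == i) && (q.+1 == j)) || ((p.+1 == j) && (q.+1 == i)) then 1 else 0).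

Definition Amx (m i : nat) : 'M[R]_(2 * m + 1) :=
  let n := (2 * m + 1)%N in
  if i == 1%N then Emx n 1 1 + Emx n (m + 1) (m + 1)
  else if i == m then
    Emx n m m - Emx n (2 * m) (2 * m) + Emx n (m - 1) n + Emx n (2 * m - 1) n
  else Emx n i i + Emx n (m + i) (m + i) + Emx n (i - 1) n + Emx n (m + i - 1) n.

Definition Bmx (m : nat) : 'M[R]_(2 * m + 1) :=
  \matrix_(p, q) (if (p == q) && (p < m + 1)%N then 1 else 0).

Definition cvec (m i : nat) : R := if i == m then 1 else 0.

Definition D_aff (m : nat) (Y : 'M[R]_(2 * m + 1)) : Prop :=
  symm Y /\ forall i, (1 <= i <= m)%N -> inner (Amx m i) Y = cvec m i.

Definition HD_lin (m : nat) (Y : 'M[R]_(2 * m + 1)) : Prop :=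
  symm Y /\ (forall i, (1 <= i <= m)%N -> inner (Amx m i) Y = 0) /\
  inner (Bmx m) Y = 0.

End SDP.

From HB Require Import structures.
From mathcomp Require Import all_boot all_order all_algebra.
From mathcomp Require Import ring lra zify.
Import Order.TTheory GRing.Theory Num.Theory.
Set Implicit Arguments. Unset Strict Implicit. Unset Printing Implicit Defensive.
Local Open Scope ring_scope.

(* Write e_a for the a-th unit vector and Y_ab = e_a^T Y e_b (1-based).
   A psd matrix with Y_aa = 0 has a zero a-th row; this fact drives both
   directions of the proof.
   - Upper bounds: explicit facial reduction sequences.  For (HD) take
     B, A_2, ..., A_(m-1), -A_m: B kills Y_11, ..., Y_(m+1),(m+1), and the
     j-th certificate then kills Y_(m+j+1),(m+j+1); the last face lies in
     the feasible set.  For (D) take A_1, ..., A_(m-1): the j-th certificate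
     kills Y_jj and Y_(m+j),(m+j); every X in the last face is the midpoint
     of two psd matrices X and X + 2W with X + W feasible, so X lies in
     every face containing the feasible set.
   - Lower bounds: a certificate y orthogonal to the feasible set is
     orthogonal to explicit test matrices 2 E_pp +- E_(p-1),N, so y_pp = 0
     as soon as y_(p-1),N = 0.  By induction, after i steps of ANY facial
     reduction sequence, every x x^T with x supported on a shrinking index
     set S_i is still in the face.  For the lengths in question e_t e_t^T
     survives (t = 2m, resp. t = m-1), although the explicit sequences
     show that it is not in the minimal cone. *)

Section Entries.
Variable R : rcfType.

(* the unit vector e_a (1-based; zero when a is out of range) *)
Definition evec (n a : nat) : 'cV[R]_n := \col_(k < n) ((k.+1 == a)%:R).

Definition entry (n : nat) (X : 'M[R]_n) (a b : nat) : R :=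
  ((evec n a)^T *m X *m evec n b) 0 0.

Definition rank1 (n : nat) (x : 'cV[R]_n) : 'M[R]_n := x *m x^T.

Lemma evec_delta n (i : 'I_n) : evec n i.+1 = delta_mx i 0.
Proof. by apply/matrixP=> k l; rewrite !mxE eqSS ord1 eqxx andbT. Qed.

Lemma entry_ord n (X : 'M[R]_n) (i j : 'I_n) : entry X i.+1 j.+1 = X i j.
Proof. by rewrite /entry !evec_delta trmx_delta -rowE -colE !mxE. Qed.

Lemma entry_sym n (X : 'M[R]_n) a b : symm X -> entry X a b = entry X b a.
Proof.
move=> sX; rewrite /entry.
transitivity (((evec n a)^T *m X *m evec n b)^T 0 0); first by rewrite [RHS]mxE.
by rewrite !trmx_mul !trmxK sX mulmxA.
Qed.

Lemma entryD n (X Y : 'M[R]_n) a b : entry (X + Y) a b = entry X a b + entry Y a b.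
Proof. by rewrite /entry mulmxDr mulmxDl mxE. Qed.

Lemma entryZ n (X : 'M[R]_n) c a b : entry (c *: X) a b = c * entry X a b.
Proof. by rewrite /entry -scalemxAr -scalemxAl mxE. Qed.

Lemma entryN n (X : 'M[R]_n) a b : entry (- X) a b = - entry X a b.
Proof. by rewrite -scaleN1r entryZ mulN1r. Qed.

Lemma entryB n (X Y : 'M[R]_n) a b : entry (X - Y) a b = entry X a b - entry Y a b.
Proof. by rewrite entryD entryN. Qed.

Lemma entry_Emx n c d a b : (0 < a <= n)%N -> (0 < b <= n)%N ->
  entry (Emx R n c d) a b =
  if ((a == c) && (b == d)) || ((a == d) && (b == c)) then 1 else 0.
Proof.
case: a => // a ha; case: b => // b hb.
have ha' : (a < n)%N by lia.
have hb' : (b < n)%N by lia.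
by rewrite (entry_ord _ (Ordinal ha') (Ordinal hb')) mxE.
Qed.

Lemma innerC n (X Y : 'M[R]_n) : inner X Y = inner Y X.
Proof. exact: mxtrace_mulC. Qed.

Lemma innerDl n (A B X : 'M[R]_n) : inner (A + B) X = inner A X + inner B X.
Proof. by rewrite /inner mulmxDl mxtraceD. Qed.

Lemma innerDr n (A X Y : 'M[R]_n) : inner A (X + Y) = inner A X + inner A Y.
Proof. by rewrite /inner mulmxDr mxtraceD. Qed.

Lemma innerZl n (A X : 'M[R]_n) c : inner (c *: A) X = c * inner A X.
Proof. by rewrite /inner -scalemxAl mxtraceZ. Qed.

Lemma innerZr n (A X : 'M[R]_n) c : inner A (c *: X) = c * inner A X.
Proof. by rewrite /inner -scalemxAr mxtraceZ. Qed.

Lemma innerNl n (A X : 'M[R]_n) : inner (- A) X = - inner A X.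
Proof. by rewrite -scaleN1r innerZl mulN1r. Qed.


Lemma tr_rank1 n (u v : 'cV[R]_n) (X : 'M[R]_n) :
  \tr (u *m v^T *m X) = (v^T *m X *m u) 0 0.
Proof. by rewrite -mulmxA mxtrace_mulC /mxtrace big_ord1. Qed.

Lemma inner_rank1 n (y : 'M[R]_n) x : inner y (rank1 x) = (x^T *m y *m x) 0 0.
Proof. by rewrite innerC /inner /rank1 tr_rank1. Qed.

Lemma Emx_rank1 n a b : Emx R n a b =
  evec n a *m (evec n b)^T + (if a == b then 0 else evec n b *m (evec n a)^T).
Proof.
apply/matrixP=> p q; rewrite !mxE big_ord1 !mxE.
case: (a =P b) => [->|nab]; rewrite ?mxE ?big_ord1 ?mxE ?addr0.
  by rewrite orbb; case: (p.+1 == b); case: (q.+1 == b); rewrite ?mulr1 ?mulr0.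
case: (p.+1 =P a) => hp; case: (q.+1 =P b) => hq;
  case: (p.+1 =P b) => hp'; case: (q.+1 =P a) => hq' /=;
  rewrite ?mulr1 ?mulr0 ?addr0 ?add0r //; congruence.
Qed.

Lemma inner_Emx n a b (X : 'M[R]_n) :
  inner (Emx R n a b) X = entry X b a + (if a == b then 0 else entry X a b).
Proof.
rewrite /inner Emx_rank1 mulmxDl mxtraceD tr_rank1; congr (_ + _).
by case: ifP; rewrite ?mul0mx ?mxtrace0 // tr_rank1.
Qed.

Lemma inner_Emx_diag n a (y : 'M[R]_n) : inner y (Emx R n a a) = entry y a a.
Proof. by rewrite innerC inner_Emx eqxx addr0. Qed.

Lemma rank1_evec n a : rank1 (evec n a) = Emx R n a a.
Proof. by rewrite Emx_rank1 eqxx addr0. Qed.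

Lemma symmD n (X Y : 'M[R]_n) : symm X -> symm Y -> symm (X + Y).
Proof. by rewrite /symm => sX sY; rewrite linearD /= sX sY. Qed.

Lemma symmZ n (X : 'M[R]_n) c : symm X -> symm (c *: X).
Proof. by rewrite /symm => sX; rewrite linearZ /= sX. Qed.

Lemma symmN n (X : 'M[R]_n) : symm X -> symm (- X).
Proof. by move=> sX; rewrite -scaleN1r; apply: symmZ. Qed.


Lemma symm_Emx n a b : symm (Emx R n a b).
Proof.
apply/matrixP=> i j; rewrite !mxE orbC.
by rewrite (andbC (j.+1 == a)) (andbC (j.+1 == b)).
Qed.

End Entries.

Section PsdCone.
Variable R : rcfType.
Variable n : nat.
Implicit Types (X Y : 'M[R]_n) (x : 'cV[R]_n).

Definition qform X x : R := (x^T *m X *m x) 0 0.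

Lemma qform_lin X Y x s t :
  qform (s *: X + t *: Y) x = s * qform X x + t * qform Y x.
Proof. by rewrite /qform mulmxDr mulmxDl mxE -!scalemxAr -!scalemxAl !mxE. Qed.

Lemma qform_plane X al be a b :
  qform X (al *: evec R n a + be *: evec R n b) =
  al ^+ 2 * entry X a a + al * be * (entry X a b + entry X b a)
  + be ^+ 2 * entry X b b.
Proof.
have trDZ (u v : 'cV[R]_n) c d : (c *: u + d *: v)^T = c *: u^T + d *: v^T.
  by rewrite linearD !linearZ.
rewrite /qform trDZ !mulmxDl !mulmxDr.
rewrite -!scalemxAl -!scalemxAr /entry !mxE; ring.
Qed.

Lemma entry_zero_of_plane X a b : symm X ->
  (forall al be, 0 <= qform X (al *: evec R n a + be *: evec R n b)) ->
  entry X a a = 0 -> entry X a b = 0.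
Proof.
move=> sX hq haa.
have hba := entry_sym a b sX.
set e := entry X a b in hba *; set d := entry X b b.
case: (e =P 0) => // /eqP ne.
have ne2 : e + e != 0 by rewrite -mulr2n mulrn_eq0 negb_or ne.
have := hq (- (d + 1) / (e + e)) 1.
rewrite qform_plane haa -hba -/d.
have -> : - (d + 1) / (e + e) * 1 * (e + e) = - (d + 1) by field.
rewrite expr1n mulr0 add0r mul1r; lra.
Qed.

Lemma psd_entry_ge0 X a : psd X -> 0 <= entry X a a.
Proof. by case=> _; apply. Qed.

Lemma psd_row_zero X a b : psd X -> entry X a a = 0 -> entry X a b = 0.
Proof. by case=> sX hX; apply: entry_zero_of_plane => // al be; apply: hX. Qed.

Lemma psd_rank1 x : psd (rank1 x).
Proof.
split; first by rewrite /symm /rank1 trmx_mul trmxK.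
move=> z; rewrite /rank1 mulmxA -mulmxA mxE big_ord1.
have -> : (x^T *m z) 0 0 = (z^T *m x) 0 0.
  by rewrite -[in LHS](trmxK z) -trmx_mul mxE.
by rewrite -expr2 sqr_ge0.
Qed.

Lemma psd_Emx a : psd (Emx R n a a).
Proof. by rewrite -rank1_evec; apply: psd_rank1. Qed.

Lemma psd_lin X Y s t : 0 <= s -> 0 <= t -> psd X -> psd Y ->
  psd (s *: X + t *: Y).
Proof.
move=> hs ht [sX hX] [sY hY]; split; first by apply: symmD; apply: symmZ.
by move=> x; rewrite -/(qform _ x) qform_lin addr_ge0 ?mulr_ge0 ?hX ?hY.
Qed.

Lemma psdD X Y : psd X -> psd Y -> psd (X + Y).
Proof. by move=> hX hY; have := psd_lin ler01 ler01 hX hY; rewrite !scale1r. Qed.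

Lemma psdZ X c : 0 <= c -> psd X -> psd (c *: X).
Proof.
by move=> hc hX; have := psd_lin hc (lexx 0) hX hX; rewrite scale0r addr0.
Qed.

End PsdCone.

Section FacialReduction.
Variable R : rcfType.
Variable n : nat.
Implicit Types (X Y y : 'M[R]_n) (H F : 'M[R]_n -> Prop) (ys : nat -> 'M[R]_n).

Notation K := (@psd R n).

Definition fr_seq H ys (k : nat) : Prop :=
  forall i, (i < k)%N -> dual_cone (fr_face K ys i) (ys i) /\ perp H (ys i).

Lemma fr_face_psd ys i X : fr_face K ys i X -> psd X.
Proof. by elim: i X => [//|i IH] X /= [/IH]. Qed.

Lemma fr_face_le ys i j X : (i <= j)%N -> fr_face K ys j X -> fr_face K ys i X.
Proof.
elim: j => [|j IH] hij; first by have -> : i = 0%N by lia.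
case: (i =P j.+1) => [-> //|ne] /= [hX _]; apply: IH => //; lia.
Qed.

Lemma fr_face_inner ys i j X :
  (i < j)%N -> fr_face K ys j X -> inner (ys i) X = 0.
Proof. by move=> hij /(fr_face_le hij) []. Qed.

Lemma fr_face_feasible H ys k X :
  (forall i, (i < k)%N -> perp H (ys i)) -> H X -> psd X -> fr_face K ys k X.
Proof.
move=> hp hH hK; elim: k hp => [//|k IH] hp /=; split.
  by apply: IH => i hi; apply: hp; lia.
by have [_ ->] := hp k (ltnSn k).
Qed.

Lemma psd_convex : convex K.
Proof. by move=> x y t h0 h1; apply: psd_lin; rewrite ?subr_ge0. Qed.

Lemma face_cut F y : is_face K F -> dual_cone F y ->
  is_face K (fun X => F X /\ inner y X = 0).
Proof.
move=> [hsub [hcv hf]] [_ hd]; split; first by move=> x [/hsub].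
split.
  move=> x z t h0 h1 [fx ix] [fz iz]; split; first exact: hcv.
  by rewrite innerDr !innerZr ix iz !mulr0 addr0.
move=> x z kx kz [fm im].
have [fx fz] := hf x z kx kz fm.
have := hd x fx; have := hd z fz.
have h2 : (2 : R)^-1 != 0 by rewrite invr_eq0 pnatr_eq0.
move: im => /eqP; rewrite innerZr innerDr mulf_eq0 (negbTE h2) /= => /eqP im.
by move=> hz hx; split; split => //; lra.
Qed.

Lemma fr_face_is_face ys k :
  (forall i, (i < k)%N -> dual_cone (fr_face K ys i) (ys i)) ->
  is_face K (fr_face K ys k).
Proof.
elim: k => [|k IH] hd /=.
  by split=> //; split; [exact: psd_convex|].
apply: face_cut; last by apply: hd.
by apply: IH => i hi; apply: hd; lia.
Qed.

Lemma min_cone_fr_face H ys k X :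
  fr_seq H ys k -> min_cone H K X -> fr_face K ys k X.
Proof.
move=> hv [_ hm]; apply: hm.
  by apply: fr_face_is_face => i hi; case: (hv i hi).
by move=> Y hY kY; apply: (fr_face_feasible _ hY kY) => i hi; case: (hv i hi).
Qed.

Lemma min_cone_feasible H X : H X -> psd X -> min_cone H K X.
Proof. by move=> hH hK; split=> // F _; apply. Qed.

Lemma fr_length_okP H ys k : fr_seq H ys k ->
  (forall X, fr_face K ys k X -> min_cone H K X) -> fr_length_ok H K k.
Proof.
move=> hv hmin; exists ys; split=> // X; split; first exact: hmin.
exact: min_cone_fr_face.
Qed.

Lemma perp_direction H y X0 Z : perp H y -> H X0 -> H (X0 + Z) -> inner y Z = 0.
Proof. by move=> [_ hy] h0 h1; have := hy _ h1; rewrite innerDr hy // add0r. Qed.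

End FacialReduction.

Section RankOneInvariant.
Variable R : rcfType.
Variable n : nat.
Implicit Types (y : 'M[R]_n) (x : 'cV[R]_n) (F H : 'M[R]_n -> Prop).

Notation K := (@psd R n).

Definition supp (S : pred nat) x : Prop := forall k : 'I_n, ~~ S k.+1 -> x k 0 = 0.

Lemma supp_plane (S : pred nat) a b al be :
  S a -> S b -> supp S (al *: evec R n a + be *: evec R n b).
Proof.
move=> ha hb k hk; rewrite !mxE.
case: (k.+1 =P a) => [e|_]; first by move: hk; rewrite e ha.
case: (k.+1 =P b) => [e|_]; first by move: hk; rewrite e hb.
by rewrite !mulr0 addr0.
Qed.

Lemma supp_evec (S : pred nat) a : S a -> supp S (evec R n a).
Proof. by move=> ha; have := supp_plane 1 0 ha ha; rewrite scale1r scale0r addr0. Qed.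

Lemma supp_sub (S S' : pred nat) x : (forall p, S' p -> S p) -> supp S' x -> supp S x.
Proof. by move=> hS hx k hk; apply: hx; apply: contra hk; apply: hS. Qed.

Lemma qform_supp_zero (S : pred nat) y x :
  (forall p q, S p -> S q -> entry y p q = 0) -> supp S x -> qform y x = 0.
Proof.
move=> hy hx; rewrite /qform mxE big1 // => j _; rewrite mxE.
case: (boolP (S j.+1)) => hj; last by rewrite (hx j hj) mulr0.
rewrite big1 ?mul0r // => i _; rewrite mxE.
case: (boolP (S i.+1)) => hi; last by rewrite (hx i hi) mul0r.
by rewrite -entry_ord hy // mulr0.
Qed.

(* if F contains all x x^T with x supported on S, a dual element y of F
   behaves on S like a psd matrix: a zero diagonal entry kills its row *)
Lemma dual_row_zero F (S : pred nat) y p q :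
  (forall x, supp S x -> F (rank1 x)) -> dual_cone F y -> S p -> S q ->
  entry y p p = 0 -> entry y p q = 0.
Proof.
move=> hF [sy hd] hp hq hpp; apply: entry_zero_of_plane => // al be.
by rewrite /qform -inner_rank1; apply: hd; apply: hF; apply: supp_plane.
Qed.

Lemma fr_face_rank1_step ys i (S S' : pred nat) :
  (forall p, S' p -> S p) ->
  (forall x, supp S x -> fr_face K ys i (rank1 x)) ->
  dual_cone (fr_face K ys i) (ys i) ->
  (forall p, S' p -> entry (ys i) p p = 0) ->
  forall x, supp S' x -> fr_face K ys i.+1 (rank1 x).
Proof.
move=> hS hF hdual hd x hx /=; split; first by apply: hF; apply: supp_sub hx.
rewrite inner_rank1; apply: (qform_supp_zero (S := S')) hx => p q hp hq.
by apply: (dual_row_zero hF hdual); [apply: hS|apply: hS|apply: hd].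
Qed.

Section Invariant.
Variable H : 'M[R]_n -> Prop.
Variable S : nat -> pred nat.
Variable c : nat.
Hypothesis S_shrink : forall i p, S i.+1 p -> S i p.
Hypothesis S_pivot : forall i, S i c.
Hypothesis perp_pivot : forall y, perp H y -> entry y c c = 0.
Hypothesis perp_diag : forall i y, perp H y ->
  (forall p, S i p -> entry y p c = 0) -> forall p, S i.+1 p -> entry y p p = 0.

Lemma rank1_in_fr_faces ys k : fr_seq H ys k ->
  forall i, (i <= k)%N -> forall x, supp (S i) x -> fr_face K ys i (rank1 x).
Proof.
move=> hv; elim=> [|i IH] hi x hx; first exact: psd_rank1.
have [hd hp] := hv i hi.
have hF := IH (ltnW hi).
have col0 p : S i p -> entry (ys i) p c = 0.
  move=> hpS; rewrite (entry_sym _ _ hd.1).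
  exact: (dual_row_zero hF hd (S_pivot i) hpS (perp_pivot hp)).
apply: (fr_face_rank1_step (@S_shrink i) hF hd _ hx).
exact: perp_diag hp col0.
Qed.

Lemma fr_length_lower t j : S j t -> ~ min_cone H K (rank1 (evec R n t)) ->
  ~ fr_length_ok H K j.
Proof.
move=> ht hnot [ys [hv hfr]]; apply/hnot/hfr.
by apply: (rank1_in_fr_faces hv (leqnn j)); apply: supp_evec.
Qed.

End Invariant.
End RankOneInvariant.

Lemma eqn_true (x y : nat) : x = y -> (x == y) = true.
Proof. by move=> ->; rewrite eqxx. Qed.

Lemma eqn_false (x y : nat) : x <> y -> (x == y) = false.
Proof. by move/eqP/negbTE. Qed.

Ltac decide_index_eqs :=
  repeat match goal with |- context[?x == ?y] =>
    match type of x with nat => idtac end;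
    first [ rewrite (eqn_true (_ : x = y)); [|lia]
          | rewrite (eqn_false (_ : x <> y)); [|lia]
          | case: (x =P y) => ? ] end.

Ltac eval_entries :=
  decide_index_eqs; rewrite ?(entryD, entryB, entryZ, entryN) ?entry_Emx; try lia;
  decide_index_eqs; rewrite /=.

Section Example.
Variable R : rcfType.
Variable m : nat.
Hypothesis hm : (2 <= m)%N.

Notation N := (2 * m + 1)%N.
Notation M := 'M[R]_(2 * m + 1).
Notation A := (Amx R m).
Notation B := (Bmx R m).
Notation E := (Emx R (2 * m + 1)).

Lemma symm_Amx i : symm (A i).
Proof.
rewrite /Amx /=; case: ifP => _; last case: ifP => _;
  repeat (apply: symmD || apply: symmN || apply: symm_Emx).
Qed.

Lemma symm_Bmx : symm B.
Proof.
apply/matrixP=> i j; rewrite !mxE.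
by case: (i =P j) => [->|/eqP h]; rewrite ?eqxx // eq_sym (negbTE h).
Qed.

Lemma inner_Amx i (X : M) : symm X -> (1 <= i <= m)%N -> inner (A i) X =
  if i == 1%N then entry X 1 1 + entry X (m + 1) (m + 1)
  else if i == m then entry X m m - entry X (2 * m) (2 * m)
    + 2 * entry X (m - 1) N + 2 * entry X (2 * m - 1) N
  else entry X i i + entry X (m + i) (m + i)
    + 2 * entry X (i - 1) N + 2 * entry X (m + i - 1) N.
Proof.
move=> sX hi; rewrite /Amx /=.
case: ifP => _; first by rewrite innerDl !inner_Emx !eqxx !addr0.
case: ifP => _; rewrite !(innerDl, innerNl) !inner_Emx !eqxx !addr0;
  decide_index_eqs; rewrite !(entry_sym _ N sX); ring.
Qed.

Lemma inner_Bmx (X : M) :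
  inner B X = \sum_(p < N) (if (p < m + 1)%N then X p p else 0).
Proof.
apply: eq_bigr => p _; rewrite mxE (bigD1 p) //= big1.
  by rewrite mxE eqxx /=; case: ifP; rewrite ?mul1r ?mul0r addr0.
by move=> q hq; rewrite mxE eq_sym (negbTE hq) mul0r.
Qed.

Lemma inner_Bmx_ge0 (X : M) : psd X -> 0 <= inner B X.
Proof.
move=> hX; rewrite inner_Bmx; apply: sumr_ge0 => p _.
by case: ifP => // _; rewrite -entry_ord; apply: psd_entry_ge0.
Qed.

Lemma inner_Bmx_eq0 (X : M) : psd X -> inner B X = 0 ->
  forall k, (1 <= k <= m + 1)%N -> entry X k k = 0.
Proof.
move=> hX; rewrite inner_Bmx => /psumr_eq0P hz [//|k] hk.
have hk' : (k < N)%N by lia.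
have hkB : (k < m + 1)%N by lia.
have hge (p : 'I_N) : true -> 0 <= (if (p < m + 1)%N then X p p else 0).
  by case: ifP => // _; have := psd_entry_ge0 p.+1 hX; rewrite entry_ord.
by have := hz hge (Ordinal hk') isT; rewrite /= hkB (entry_ord X (Ordinal hk') (Ordinal hk')).
Qed.

Lemma inner_Bmx_zero (X : M) :
  (forall k, (1 <= k <= m + 1)%N -> entry X k k = 0) -> inner B X = 0.
Proof.
move=> h; rewrite inner_Bmx big1 // => p _; case: ifP => // hp.
by rewrite -entry_ord h //; lia.
Qed.

Definition dirA (Y : M) : Prop :=
  symm Y /\ forall i, (1 <= i <= m)%N -> inner (A i) Y = 0.

Definition tmx (p : nat) (s : R) : M := 2%:R *: E p p + s *: E (p - 1) N.


Lemma inner_tmx (y : M) p s : symm y -> (p - 1 != N)%N ->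
  inner y (tmx p s) = 2%:R * (entry y p p + s * entry y (p - 1) N).
Proof.
move=> sy hp; rewrite innerDr !innerZr inner_Emx_diag innerC inner_Emx.
by rewrite (negbTE hp) (entry_sym _ N sy); ring.
Qed.

Ltac prove_symm := repeat (apply: symmD || apply: symmZ || apply: symm_Emx).

Ltac dirA_by_entries :=
  split; [by prove_symm|];
  move=> i hi; rewrite inner_Amx //; [eval_entries; lra | by prove_symm].

Lemma dirA_tmx p : ((2 <= p <= m - 1) || (m + 2 <= p <= 2 * m - 1))%N ->
  dirA (tmx p (-1)).
Proof. move=> hp; rewrite /tmx; dirA_by_entries. Qed.

Lemma dirA_corner : dirA (tmx (2 * m) 1).
Proof. rewrite /tmx; dirA_by_entries. Qed.

Lemma dirA_ENN : dirA (E N N).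
Proof. dirA_by_entries. Qed.

Lemma dirA_Emm_E2m : dirA (E m m + E (2 * m) (2 * m)).
Proof. dirA_by_entries. Qed.

Lemma inner_Amx_Emm i : (1 <= i <= m)%N -> inner (A i) (E m m) = cvec R m i.
Proof. move=> hi; rewrite /cvec inner_Amx //; [eval_entries; lra|by prove_symm]. Qed.

Lemma inner_Amx_E2m i : (1 <= i <= m)%N ->
  inner (A i) (E (2 * m) (2 * m)) = - cvec R m i.
Proof. move=> hi; rewrite /cvec inner_Amx //; [eval_entries; lra|by prove_symm]. Qed.

Lemma inner_Amx_Em1 : inner (A (m - 1)) (E (m - 1) (m - 1)) = 1.
Proof. rewrite inner_Amx; [eval_entries; lra|by prove_symm|lia]. Qed.

Lemma inner_Bmx_tmx p s : (m + 2 <= p <= 2 * m)%N -> inner B (tmx p s) = 0.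
Proof. by move=> hp; apply: inner_Bmx_zero => k hk; rewrite /tmx; eval_entries; lra. Qed.

Lemma inner_Bmx_ENN : inner B (E N N) = 0.
Proof. by apply: inner_Bmx_zero => k hk; eval_entries; lra. Qed.

Lemma HD_of_dirA Y : dirA Y -> inner B Y = 0 -> HD_lin Y.
Proof. by case. Qed.

Lemma tmx_diag_zero (y : M) p s : symm y -> (p - 1 != N)%N ->
  inner y (tmx p s) = 0 -> entry y (p - 1) N = 0 -> entry y p p = 0.
Proof.
by move=> sy hp; rewrite inner_tmx // => h0 h1; move: h0; rewrite h1 mulr0 addr0; lra.
Qed.

Notation K := (@psd R (2 * m + 1)).

Definition ysH (j : nat) : M :=
  if j == 0%N then B else if j.+1 == m then - A m else A j.+1.

Lemma symm_ysH j : symm (ysH j).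
Proof.
rewrite /ysH; case: ifP => _; first exact: symm_Bmx.
by case: ifP => _; [apply: symmN|]; apply: symm_Amx.
Qed.

Lemma inner_ysH j (X : M) : (1 <= j <= m - 1)%N -> psd X ->
  (forall k, (1 <= k <= m + j)%N -> entry X k k = 0) ->
  inner (ysH j) X = entry X (m + j).+1 (m + j).+1.
Proof.
move=> hj hX hz.
have row0 k b : (1 <= k <= m + j)%N -> entry X k b = 0.
  by move=> hk; apply: psd_row_zero hX (hz k hk).
rewrite /ysH (eqn_false (_ : j <> 0%N)); last lia.
case: (j.+1 =P m) => e.
  rewrite innerNl inner_Amx //; [|exact: hX.1|lia].
  rewrite (eqn_false (_ : m <> 1%N)) ?eqxx; last lia.
  rewrite (hz m) ?(row0 (m - 1)%N) ?(row0 (2 * m - 1)%N); try lia.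
  have -> : (m + j).+1 = (2 * m)%N by lia.
  ring.
rewrite inner_Amx //; [|exact: hX.1|lia].
rewrite (eqn_false (_ : j.+1 <> 1%N)) ?(eqn_false (_ : j.+1 <> m)); try lia.
rewrite (addnS m j) !subn1 /= (hz j.+1) ?(row0 j) ?(row0 (m + j)%N); try lia.
ring.
Qed.

Lemma HD_face_diag j (X : M) : (1 <= j <= m)%N -> fr_face K ysH j X ->
  forall k, (1 <= k <= m + j)%N -> entry X k k = 0.
Proof.
elim: j X => [//|j IH] X hj /= [hF hj0].
have hX := fr_face_psd hF.
case: (j =P 0%N) => [j0|nj].
  move: hj0; rewrite j0 /ysH /= => hB k hk.
  by apply: (inner_Bmx_eq0 hX hB); lia.
have hz := IH X ltac:(lia) hF.
move=> k hk; case: (k =P (m + j).+1) => [->|nk]; last by apply: hz; lia.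
by rewrite -(inner_ysH _ hX hz) //; lia.
Qed.

Lemma HD_fr_seq : fr_seq (@HD_lin R m) ysH m.
Proof.
move=> i hi; split; split; try exact: symm_ysH.
  move=> X hX; have hK := fr_face_psd hX.
  case: (i =P 0%N) => [->|ni]; first by rewrite /ysH; exact: inner_Bmx_ge0.
  rewrite inner_ysH //; [exact: psd_entry_ge0|lia|].
  by apply: HD_face_diag hX; lia.
move=> X [_ [hA hB]]; rewrite /ysH; case: ifP => _ //; case: ifP => /eqP e.
  by rewrite innerNl hA ?oppr0 //; lia.
by apply: hA; lia.
Qed.

Lemma HD_last_face (X : M) : fr_face K ysH m X -> HD_lin X.
Proof.
move=> hX; have hK := fr_face_psd hX; have sX := hK.1.
split=> //; split; last first.
  have hm0 : (0 < m)%N by lia.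
  by have := fr_face_inner hm0 hX; rewrite /ysH eqxx.
move=> i hi; case: (i =P 1%N) => [i1|ni].
  rewrite (inner_Amx sX hi) i1 eqxx.
  by rewrite !(HD_face_diag _ hX) ?addr0 //; lia.
have hi1 : (i - 1 < m)%N by lia.
have := fr_face_inner hi1 hX; rewrite /ysH.
have -> : (i - 1).+1 = i by lia.
rewrite (eqn_false (_ : (i - 1)%N <> 0%N)); last lia.
case: ifP => /eqP e //.
by rewrite innerNl e => /eqP; rewrite oppr_eq0 => /eqP.
Qed.

Lemma HD_upper : fr_length_ok (@HD_lin R m) K m.
Proof.
apply: (fr_length_okP HD_fr_seq) => X hX.
exact: min_cone_feasible (HD_last_face hX) (fr_face_psd hX).
Qed.

Definition SH (i : nat) : pred nat := fun p => ((m + i + 1 <= p <= 2 * m) || (p == N))%N.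

Lemma HD_perp_pivot (y : M) : perp (@HD_lin R m) y -> entry y N N = 0.
Proof.
move=> [_ hy]; rewrite -inner_Emx_diag; apply: hy.
exact: HD_of_dirA dirA_ENN inner_Bmx_ENN.
Qed.

Lemma HD_perp_diag i (y : M) : perp (@HD_lin R m) y ->
  (forall p, SH i p -> entry y p N = 0) -> forall p, SH i.+1 p -> entry y p p = 0.
Proof.
move=> hy hcol p /orP [hp|/eqP ->]; last exact: HD_perp_pivot.
have hcol' : entry y (p - 1) N = 0 by apply: hcol; apply/orP; left; lia.
have hpN : (p - 1 != N)%N by apply/eqP; lia.
case: (p =P (2 * m)%N) => [p2|np].
  apply: (tmx_diag_zero (s := 1) hy.1 hpN _ hcol'); apply: hy.2; rewrite p2.
  by apply: HD_of_dirA dirA_corner (inner_Bmx_tmx _ _); lia.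
apply: (tmx_diag_zero (s := -1) hy.1 hpN _ hcol'); apply: hy.2.
by apply: HD_of_dirA (dirA_tmx _) (inner_Bmx_tmx _ _); [apply/orP; right|]; lia.
Qed.

(* e_2m e_2m^T is not in the minimal cone of (HD): A_m o E_(2m),(2m) = -1 *)
Lemma HD_E2m_not_min : ~ min_cone (@HD_lin R m) K (rank1 (evec R N (2 * m))).
Proof.
rewrite rank1_evec => /(min_cone_fr_face HD_fr_seq) /HD_last_face [_ [hA _]].
have := hA m; rewrite inner_Amx_E2m /cvec ?eqxx; try lia.
by move=> /(_ ltac:(lia)) /eqP; rewrite oppr_eq0 oner_eq0.
Qed.

Lemma HD_degree : sing_degree (@HD_lin R m) K m.
Proof.
split=> [|j hj]; first exact: HD_upper.
apply: (fr_length_lower (S := SH) (c := N) _ _ HD_perp_pivot HD_perp_diag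
  (t := (2 * m)%N)) HD_E2m_not_min; rewrite /SH.
- by move=> i p /orP [h|->]; apply/orP; [left; lia|right].
- by move=> i; rewrite eqxx orbT.
- by apply/orP; left; lia.
Qed.

Definition ysD (j : nat) : M := A j.+1.

Lemma inner_ysD j (X : M) : (1 <= j <= m - 2)%N -> psd X ->
  (forall k, ((1 <= k <= j) || (m + 1 <= k <= m + j))%N -> entry X k k = 0) ->
  inner (ysD j) X = entry X j.+1 j.+1 + entry X (m + j).+1 (m + j).+1.
Proof.
move=> hj hX hz.
have row0 k b : ((1 <= k <= j) || (m + 1 <= k <= m + j))%N -> entry X k b = 0.
  by move=> hk; apply: psd_row_zero hX (hz k hk).
rewrite /ysD inner_Amx //; [|exact: hX.1|lia].
rewrite (eqn_false (_ : j.+1 <> 1%N)) ?(eqn_false (_ : j.+1 <> m)); try lia.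
rewrite (addnS m j) !subn1 /= (row0 j) ?(row0 (m + j)%N); try (apply/orP; lia).
ring.
Qed.

Lemma D_face_diag j (X : M) : (1 <= j <= m - 1)%N -> fr_face K ysD j X ->
  forall k, ((1 <= k <= j) || (m + 1 <= k <= m + j))%N -> entry X k k = 0.
Proof.
elim: j X => [//|j IH] X hj /= [hF hj0].
have hX := fr_face_psd hF.
case: (j =P 0%N) => [j0|nj].
  have h11 : (1 <= 1 <= m)%N by lia.
  move: hj0; rewrite j0 /ysD (inner_Amx hX.1 h11) eqxx => h1.
  have h2 := psd_entry_ge0 1 hX; have h3 := psd_entry_ge0 (m + 1) hX.
  move=> k hk; have [->|->] : k = 1%N \/ k = (m + 1)%N by lia.
    lra.
  lra.
have hjj := psd_entry_ge0 j.+1 hX; have hmj := psd_entry_ge0 (m + j).+1 hX.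
have hz := IH X ltac:(lia) hF.
move: hj0; rewrite inner_ysD //; last lia.
move=> hsum k hk; case: (k =P j.+1) => [->|nk]; first lra.
case: (k =P (m + j).+1) => [->|nk']; first lra.
by apply: hz; apply/orP; lia.
Qed.

Lemma D_fr_seq : fr_seq (@D_aff R m) ysD (m - 1).
Proof.
move=> i hi; split; split; try exact: symm_Amx.
  move=> X hX; have hK := fr_face_psd hX.
  have hdiag := psd_entry_ge0 _ hK.
  case: (i =P 0%N) => [->|ni].
    by rewrite /ysD inner_Amx ?eqxx ?addr_ge0 //; [exact: hK.1|lia].
  rewrite inner_ysD ?addr_ge0 //; first lia.
  by apply: D_face_diag hX; lia.
move=> X [_ hA]; rewrite /ysD hA; last lia.
by rewrite /cvec (eqn_false (_ : i.+1 <> m)) //; lia.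
Qed.

Lemma D_feasible_Emm : D_aff (E m m).
Proof. by split; [exact: symm_Emx|exact: inner_Amx_Emm]. Qed.

(* the last face lies in the minimal cone: each of its points X is the
   midpoint of X + 2W and X, where X + W is feasible for a psd W *)
Lemma D_last_face_min (X : M) : fr_face K ysD (m - 1) X -> min_cone (@D_aff R m) K X.
Proof.
move=> hX; have hK := fr_face_psd hX; split=> // F [_ [_ hF]] hH.
set d := inner (A m) X.
pose W : M := if d <= 1 then (1 - d) *: E m m else (d - 1) *: E (2 * m) (2 * m).
have hW : psd W.
  by rewrite /W; case: (leP d 1) => hd; apply: psdZ; first [lra|exact: psd_Emx].
have hAX i : (1 <= i < m)%N -> inner (A i) X = 0.
  move=> hi; have hi1 : (i - 1 < m - 1)%N by lia.
  by have := fr_face_inner hi1 hX; rewrite /ysD (_ : (i - 1).+1 = i) //; lia.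
have hAW i : (1 <= i <= m)%N -> inner (A i) W = (1 - d) * cvec R m i.
  move=> hi; rewrite /W; case: ifP => hd; rewrite innerZr.
    by rewrite inner_Amx_Emm.
  by rewrite inner_Amx_E2m //; ring.
have hXW : D_aff (X + W).
  split; first by apply: symmD; [exact: hK.1|exact: hW.1].
  move=> i hi; rewrite innerDr hAW //; case: (i =P m) => [->|ni].
    by rewrite /cvec eqxx -/d; ring.
  by rewrite hAX ?/cvec ?(eqn_false ni); [ring|lia].
have hmid : 2^-1 *: (X + (X + 2%:R *: W)) = X + W.
  have h2 : (2 : R) != 0 by rewrite pnatr_eq0.
  rewrite addrA -{1 2}[X]scale1r -scalerDl scalerDr !scalerA -mulr2n.
  by rewrite mulVf // !scale1r.
have hX2W : psd (X + 2%:R *: W) by apply: psdD => //; apply: psdZ.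
have [] := hF X (X + 2%:R *: W) hK hX2W; last by [].
by rewrite hmid; apply: hH => //; apply: psdD.
Qed.

Lemma D_upper : fr_length_ok (@D_aff R m) K (m - 1).
Proof. exact: fr_length_okP D_fr_seq D_last_face_min. Qed.

Lemma D_perp_dirA (y : M) Z : perp (@D_aff R m) y -> dirA Z -> inner y Z = 0.
Proof.
move=> hy [sZ hZ]; apply: (perp_direction hy D_feasible_Emm).
split; first by apply: symmD => //; apply: symm_Emx.
by move=> i hi; rewrite innerDr hZ // addr0 inner_Amx_Emm.
Qed.

Definition SD (i : nat) : pred nat := fun p =>
  [|| (i + 1 <= p <= m)%N, (m + i + 1 <= p <= 2 * m)%N | p == N].

Lemma D_perp_pivot (y : M) : perp (@D_aff R m) y -> entry y N N = 0.
Proof. by move=> hy; rewrite -inner_Emx_diag; apply: D_perp_dirA dirA_ENN. Qed.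

Lemma D_perp_Emm (y : M) : perp (@D_aff R m) y -> entry y m m = 0.
Proof. by move=> [_ hy]; rewrite -inner_Emx_diag; apply: hy D_feasible_Emm. Qed.

Lemma D_perp_diag i (y : M) : perp (@D_aff R m) y ->
  (forall p, SD i p -> entry y p N = 0) -> forall p, SD i.+1 p -> entry y p p = 0.
Proof.
move=> hy hcol p hp.
case/or3P: hp => [hp|hp|/eqP ->]; last exact: D_perp_pivot.
- case: (p =P m) => [->|np]; first exact: D_perp_Emm.
  have hcol' : entry y (p - 1) N = 0 by apply: hcol; apply/orP; left; lia.
  apply: (tmx_diag_zero (s := -1) hy.1 _ _ hcol'); first by apply/eqP; lia.
  by apply: D_perp_dirA hy (dirA_tmx _); apply/orP; left; lia.
- case: (p =P (2 * m)%N) => [->|np].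
    have := D_perp_dirA hy dirA_Emm_E2m.
    by rewrite innerDr !inner_Emx_diag D_perp_Emm // add0r.
  have hcol' : entry y (p - 1) N = 0.
    by apply: hcol; apply/orP; right; apply/orP; left; lia.
  apply: (tmx_diag_zero (s := -1) hy.1 _ _ hcol'); first by apply/eqP; lia.
  by apply: D_perp_dirA hy (dirA_tmx _); apply/orP; right; lia.
Qed.

(* e_(m-1) e_(m-1)^T is not in the minimal cone of (D):
   A_(m-1) o E_(m-1),(m-1) = 1 *)
Lemma D_Em1_not_min : ~ min_cone (@D_aff R m) K (rank1 (evec R N (m - 1))).
Proof.
rewrite rank1_evec => /(min_cone_fr_face D_fr_seq) hF.
have hlast : (m - 2 < m - 1)%N by lia.
have := fr_face_inner hlast hF; rewrite /ysD (_ : (m - 2).+1 = (m - 1)%N); last lia.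
by rewrite inner_Amx_Em1 => /eqP; rewrite oner_eq0.
Qed.

Lemma D_degree : sing_degree (@D_aff R m) K (m - 1).
Proof.
split=> [|j hj]; first exact: D_upper.
apply: (fr_length_lower (S := SD) (c := N) _ _ D_perp_pivot D_perp_diag
  (t := (m - 1)%N)) D_Em1_not_min; rewrite /SD.
- move=> i p /or3P [h|h|->]; apply/or3P; [constructor 1|constructor 2|constructor 3]; lia.
- by move=> i; rewrite eqxx !orbT.
- by apply/orP; left; lia.
Qed.

End Example.

Theorem theorem3 (R : rcfType) (m : nat) (hm : (2 <= m)%N) :
  sing_degree (@D_aff R m) (@psd R (2 * m + 1)) (m - 1) /\
  sing_degree (@HD_lin R m) (@psd R (2 * m + 1)) m.
Proof. by split; [exact: D_degree|exact: HD_degree]. Qed.
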